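(* Let $(S,\preceq)$ be a cc sponge and let $P$ be a nonempty left-bounded subset of $S$. Then $P$ has a meet, i.e. $M(P)\neq\emptyset$.
   Context: An orientation on $S$ is a reflexive, antisymmetric binary relation $\preceq$. $P\subseteq S$ is left-bounded if some $s\in S$ has $s\preceq p$ for all $p\in P$, right-bounded if some $s$ has $p\preceq s$ for all $p\in P$. $M(P)$ is the set of $x\in S$ with $x\preceq p$ for all $p\in P$ and $y\preceq x$ for every $y\in S$ with $y\preceq p$ for all $p\in P$ (the meet); $J(P)$ (the join) is defined dually. $(S,\preceq)$ is a cc sponge if $J(P)\ne\emptyset$ for every nonempty right-bounded $P\subseteq S$. *)

Definition reflexive {S : Type} (le : S -> S -> Prop) : Prop :=
  forall x, le x x.

Definition antisymmetric {S : Type} (le : S -> S -> Prop) : Prop :=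
  forall x y, le x y -> le y x -> x = y.

Definition orientation {S : Type} (le : S -> S -> Prop) : Prop :=
  reflexive le /\ antisymmetric le.

Definition nonempty {S : Type} (P : S -> Prop) : Prop := exists p, P p.

Definition left_bounded {S : Type} (le : S -> S -> Prop) (P : S -> Prop) : Prop :=
  exists s, forall p, P p -> le s p.

Definition right_bounded {S : Type} (le : S -> S -> Prop) (P : S -> Prop) : Prop :=
  exists s, forall p, P p -> le p s.

Definition meet_set {S : Type} (le : S -> S -> Prop) (P : S -> Prop) : S -> Prop :=
  fun x => (forall p, P p -> le x p) /\
           (forall y, (forall p, P p -> le y p) -> le y x).

Definition join_set {S : Type} (le : S -> S -> Prop) (P : S -> Prop) : S -> Prop :=
  fun x => (forall p, P p -> le p x) /\
           (forall y, (forall p, P p -> le p y) -> le x y).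

Definition cc_sponge {S : Type} (le : S -> S -> Prop) : Prop :=
  orientation le /\
  forall P : S -> Prop, nonempty P -> right_bounded le P -> nonempty (join_set le P).


Definition lower_bounds {S : Type} (le : S -> S -> Prop) (P : S -> Prop) : S -> Prop :=
  fun y => forall p, P p -> le y p.

Lemma left_bounded_lower_bounds_nonempty {S : Type} (le : S -> S -> Prop) (P : S -> Prop) :
  left_bounded le P -> nonempty (lower_bounds le P).
Proof. intros [s Hs]; exists s; exact Hs. Qed.

Lemma lower_bounds_right_bounded {S : Type} (le : S -> S -> Prop) (P : S -> Prop) :
  nonempty P -> right_bounded le (lower_bounds le P).
Proof. intros [p Hp]; exists p; intros y Hy; exact (Hy p Hp). Qed.

Lemma join_lower_bounds_meet {S : Type} (le : S -> S -> Prop) (P : S -> Prop) (x : S) :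
  join_set le (lower_bounds le P) x -> meet_set le P x.
Proof.
  intros [Hx_upper Hx_least]; split.
  - intros p Hp; apply Hx_least; intros y Hy; exact (Hy p Hp).
  - exact Hx_upper.
Qed.

Theorem mainTheorem6 (S : Type) (le : S -> S -> Prop) (P : S -> Prop) :
  cc_sponge le -> nonempty P -> left_bounded le P ->
  nonempty (meet_set le P).
Proof.
  intros [_ Hjoin] HP Hleft.
  destruct (Hjoin (lower_bounds le P)) as [x Hx].
  - exact (left_bounded_lower_bounds_nonempty le P Hleft).
  - exact (lower_bounds_right_bounded le P HP).
  - exists x; exact (join_lower_bounds_meet le P x Hx).
Qed.
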